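(* Let $\mathcal{M}\subset\mathbb{R}^d$ be a set of $n$ distinct points with the Euclidean metric, $k$ an integer with $2\le k<n$, and $0<\epsilon<\tfrac12$. Let $\epsilon_1=\frac{\epsilon}{3+2\epsilon}$. Let $P_1$ be the output of the farthest-point-insertion procedure on $(\mathcal{M},k)$ (choose $q_1,q_2\in\mathcal{M}$ realizing $\operatorname{diam}(\mathcal{M})$, set $S_2=\{q_1,q_2\}$, and for $i=2,\dots,k-1$ add a point of $\mathcal{M}$ maximizing $\delta(\cdot,S_i)$), and let $\epsilon_2=\frac{\epsilon_1R_{P_1}}{2\sqrt d}$. Partition $\mathbb{R}^d$ by an axis-parallel grid of cubic cells of side length $\epsilon_2$, and let $\mathcal{C}\subset\mathcal{M}$ contain exactly one (arbitrarily chosen) point of $\mathcal{M}$ from each cell that intersects $\mathcal{M}$. Let $P\subset\mathcal{C}$ be a $k$-point subset of $\mathcal{C}$ minimizing $GR_P$ (gap ratio with respect to $\mathcal{M}$) among all $k$-subsets of $\mathcal{C}$. Then $GR_P\le(1+\epsilon)\,GR_{OPT}$, where $GR_{OPT}=\min\{GR_{P'}:P'\subset\mathcal{M},\ |P'|=k\}$.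
   Context: For a finite set $S\subset\mathcal{M}$ with $|S|\ge2$: $\delta(x,S)=\min_{s\in S}\|x-s\|$, $R_S=\max_{x\in\mathcal{M}}\delta(x,S)$, $r_S=\min_{p,q\in S,\,p\ne q}\|p-q\|/2$, and the gap ratio is $GR_S=R_S/r_S$ (all with respect to the whole set $\mathcal{M}$). *)

From mathcomp Require Import all_boot all_order all_algebra.
From mathcomp Require Import reals.
Set Implicit Arguments. Unset Strict Implicit. Unset Printing Implicit Defensive.
Import Order.TTheory GRing.Theory Num.Theory.
Local Open Scope ring_scope.

Section GapRatio.
Variables (R : realType) (d : nat).
Local Notation pt := 'rV[R]_d.

Definition edist (x y : pt) : R := Num.sqrt (\sum_(i < d) (x 0 i - y 0 i) ^+ 2).

Definition delta (x : pt) (S : seq pt) : R :=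
  \big[Order.min/edist x (head x S)]_(s <- S) edist x s.

Definition RS (M S : seq pt) : R := \big[Order.max/0]_(x <- M) delta x S.

(* r_S = min_{p,q in S, p <> q} ||p - q|| / 2  (S has >= 2 distinct points;
   the seed of the fold is the distance of the first two points of S) *)
Definition rS (S : seq pt) : R :=
  (\big[Order.min/edist (nth 0 S 0) (nth 0 S 1)]_(p <- S)
     \big[Order.min/edist (nth 0 S 0) (nth 0 S 1)]_(q <- S | p != q) edist p q) / 2.

Definition GR (M S : seq pt) : R := RS M S / rS S.

Definition diam (M : seq pt) : R :=
  \big[Order.max/0]_(p <- M) \big[Order.max/0]_(q <- M) edist p q.

(* P1 is a possible output of farthest-point insertion on (M,k):
   P1 = [q_1; ...; q_k] with q_1,q_2 in M realizing diam M, and each further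
   q_{i+1} (i = 2..k-1) a point of M maximizing delta(., S_i), S_i = first i points. *)
Definition fpi_output (M : seq pt) (k : nat) (P1 : seq pt) : Prop :=
  [/\ size P1 = k, {subset P1 <= M},
      edist (nth 0 P1 0) (nth 0 P1 1) = diam M &
      forall i, (2 <= i < k)%N ->
        forall x, x \in M -> delta x (take i P1) <= delta (nth 0 P1 i) (take i P1)].

Definition cell (e : R) (o : pt) (x : pt) : 'I_d -> int :=
  fun i => Num.floor ((x 0 i - o 0 i) / e).

Definition grid_reps (e : R) (o : pt) (M C : seq pt) : Prop :=
  [/\ {subset C <= M},
      forall x, x \in M -> exists2 c, c \in C & cell e o c =1 cell e o x &
      forall c c', c \in C -> c' \in C -> cell e o c =1 cell e o c' -> c = c'].

End GapRatio.

(* Farthest-point insertion 2-approximates the covering radius: a point x of M is never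
   closer to P1 than two points of P1 are to each other, so R_P1 <= 2 r_P1, i.e. GR_P1 <= 2,
   and a pigeonhole argument on the k + 1 points x :: P1 against any k-set Q gives
   R_P1 <= 2 R_Q.  Replacing each point of a k-set Q by the representative of its grid cell
   moves it by at most t = sqrt d * eps2 = eps1 R_P1 / 2 <= eps1 R_Q, which raises R and
   lowers r by at most t.  When GR_Q <= 2 this yields a k-subset of C of gap ratio at most
   GR_Q (1 + eps1) / (1 - 2 eps1) = (1 + eps) GR_Q; when GR_Q > 2, snapping P1 instead gives
   GR_P <= (1 + eps) GR_P1 <= 2 (1 + eps) < (1 + eps) GR_Q. *)

From mathcomp Require Import all_boot all_order all_algebra.
From mathcomp Require Import reals.
From mathcomp Require Import ring lra zify.
Import Order.TTheory GRing.Theory Num.Theory.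
Local Open Scope ring_scope.

Set Implicit Arguments.
Unset Strict Implicit.
Unset Printing Implicit Defensive.

Lemma ratio_perturb_le (F : realFieldType) (e c a b a' b' t : F) :
  0 <= e -> 2 * e < 1 -> 1 + e <= c * (1 - 2 * e) ->
  0 < b -> 0 <= a <= 2 * b -> 0 <= t <= e * a -> a' <= a + t -> b - t <= b' ->
  a' / b' <= c * (a / b).
Proof.
move=> e_ge0 e_lt c_ge b_gt0 /andP[a_ge0 a_le] /andP[t_ge0 t_le] a'_le b'_ge.
have ea_le : e * a <= 2 * e * b by rewrite [2 * e]mulrC -mulrA ler_wpM2l.
have c_gt0 : 0 < c by nra.
have b'_gt0 : 0 < b' by nra.
have b'_ge' : (1 - 2 * e) * b <= b' by lra.
rewrite ler_pdivrMr //; apply: le_trans (_ : (1 + e) * a <= _); first by lra.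
apply: le_trans (_ : c * (1 - 2 * e) * a <= _); first exact: ler_wpM2r.
have -> : c * (1 - 2 * e) * a = c * (a / b) * ((1 - 2 * e) * b).
  by field; exact: lt0r_neq0.
by apply: ler_wpM2l => //; exact: mulr_ge0 (ltW c_gt0) (divr_ge0 a_ge0 (ltW b_gt0)).
Qed.

Lemma eps1_bounds (F : realFieldType) (eps : F) : 0 < eps ->
  let e := eps / (3 + 2 * eps) in [/\ 0 < e, 2 * e < 1 & 1 + e <= (1 + eps) * (1 - 2 * e)].
Proof.
move=> eps_gt0 e; have denom_gt0 : 0 < 3 + 2 * eps by lra.
have e_eq : e * (3 + 2 * eps) = eps by rewrite /e divfK // gt_eqF.
have e_gt0 : 0 < e by rewrite divr_gt0.
by split => //; nra.
Qed.

Lemma floor_eq_dist (F : archiRealFieldType) (a b : F) :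
  Num.floor a = Num.floor b -> `|a - b| < 1.
Proof.
move=> eq_floor; have := floor_le a; have := floorD1_gt a.
have := floor_le b; have := floorD1_gt b; rewrite eq_floor intrD.
by rewrite ltr_norml; lra.
Qed.

Section EuclideanDistance.
Variables (R : realType) (d : nat).
Local Notation pt := 'rV[R]_d.
Implicit Types x y z : pt.

Lemma edist_ge0 x y : 0 <= edist x y.
Proof. exact: sqrtr_ge0. Qed.

Lemma edistC x y : edist x y = edist y x.
Proof. by rewrite /edist; congr Num.sqrt; apply: eq_bigr => i _; rewrite -sqrrN opprB. Qed.

Lemma edistxx x : edist x x = 0.
Proof. by rewrite /edist big1 ?sqrtr0 // => i _; rewrite subrr expr0n. Qed.

Lemma edist_eq0 x y : (edist x y == 0) = (x == y).
Proof.
apply/idP/eqP => [|->]; last by rewrite edistxx.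
rewrite sqrtr_eq0 => sum_le0; apply/rowP => i; apply/eqP; rewrite -subr_eq0 -sqrf_eq0.
have sum_eq0 : \sum_(j < d) (x 0 j - y 0 j) ^+ 2 = 0.
  by apply/eqP; rewrite eq_le sum_le0 sumr_ge0 // => j _; rewrite sqr_ge0.
by move/psumr_eq0P: sum_eq0 => -> // j _; rewrite sqr_ge0.
Qed.

Lemma edist_gt0 x y : (0 < edist x y) = (x != y).
Proof. by rewrite lt_def edist_ge0 andbT edist_eq0. Qed.

Lemma dim_gt0 x y : x != y -> (0 < d)%N.
Proof.
move=> xy; rewrite lt0n; apply: contra xy => /eqP d0.
by rewrite -edist_eq0 /edist big1 ?sqrtr0 // => i; exfalso; have := ltn_ord i; lia.
Qed.

Lemma sqr_sum_mul_le (a b : 'I_d -> R) :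
  (\sum_i a i * b i) ^+ 2 <= (\sum_i a i ^+ 2) * (\sum_i b i ^+ 2).
Proof.
set S := \sum_i _ * _; set A := \sum_i a i ^+ 2; set B := \sum_i b i ^+ 2.
have A_ge0 : 0 <= A by rewrite sumr_ge0 // => i _; rewrite sqr_ge0.
have [A0|A_neq0] := eqVneq A 0.
  have a0 i : a i = 0.
    apply/eqP; rewrite -sqrf_eq0; apply/eqP.
    by move/psumr_eq0P: A0 => -> // j _; rewrite sqr_ge0.
  by rewrite A0 mul0r /S big1 ?expr0n // => i _; rewrite a0 mul0r.
have A_gt0 : 0 < A by rewrite lt_def A_neq0.
(* the quadratic [A l^2 - 2 S l + B >= 0] at its minimum [l = S / A], scaled by [A^2] *)
have : 0 <= \sum_i (A * b i - S * a i) ^+ 2 by rewrite sumr_ge0 // => i _; rewrite sqr_ge0.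
have -> : \sum_i (A * b i - S * a i) ^+ 2 = A * (A * B - S ^+ 2).
  rewrite (eq_bigr (fun i => A ^+ 2 * b i ^+ 2 - 2 * A * S * (a i * b i) + S ^+ 2 * a i ^+ 2));
    last by move=> i _; ring.
  by rewrite big_split sumrB /= -!mulr_sumr -/A -/B -/S; ring.
by rewrite pmulr_rge0 // subr_ge0.
Qed.

Lemma sqrt_sum_sqrD_le (a b : 'I_d -> R) :
  Num.sqrt (\sum_i (a i + b i) ^+ 2) <=
  Num.sqrt (\sum_i a i ^+ 2) + Num.sqrt (\sum_i b i ^+ 2).
Proof.
have sum_sqr_ge0 (f : 'I_d -> R) : 0 <= \sum_i f i ^+ 2.
  by rewrite sumr_ge0 // => i _; rewrite sqr_ge0.
have cauchy_schwarz : \sum_i a i * b i <=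
    Num.sqrt (\sum_i a i ^+ 2) * Num.sqrt (\sum_i b i ^+ 2).
  rewrite -sqrtrM // (le_trans (ler_norm _)) // -sqrtr_sqr.
  exact/ler_wsqrtr/sqr_sum_mul_le.
rewrite -[leRHS]ger0_norm ?addr_ge0 ?sqrtr_ge0 // -sqrtr_sqr ler_sqrt ?sqr_ge0 //.
have -> : \sum_i (a i + b i) ^+ 2 =
    \sum_i a i ^+ 2 + \sum_i b i ^+ 2 + 2 * \sum_i a i * b i.
  by rewrite mulr_sumr -!big_split /=; apply: eq_bigr => i _; ring.
rewrite sqrrD !sqr_sqrtr //; lra.
Qed.

Lemma edist_triangle x y z : edist x z <= edist x y + edist y z.
Proof.
rewrite /edist; under eq_bigr => i _ do rewrite -(subrKA (y 0 i)).
exact: sqrt_sum_sqrD_le.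
Qed.

Implicit Types (M S Q : seq pt).

Lemma delta_le_edist x S s : s \in S -> delta x S <= edist x s.
Proof. by move=> sS; apply: ge_bigmin_seq. Qed.

Lemma delta_attained x S : S != [::] -> exists2 s, s \in S & delta x S = edist x s.
Proof.
case: S => // h t _; rewrite /delta big_seq_cond.
elim/big_ind: _ => [|u v [s1 s1S ->] [s2 s2S ->]|s /andP[sS _]].
- by exists h; rewrite ?mem_head.
- by rewrite minEle; case: ifP => _; [exists s1 | exists s2].
- by exists s.
Qed.

Lemma delta_le_sub x S S' : S' != [::] -> {subset S' <= S} -> delta x S <= delta x S'.
Proof. by move=> /(delta_attained x)[s s_S' ->] sub; apply/delta_le_edist/sub. Qed.

Lemma delta_le_RS M S x : x \in M -> delta x S <= RS M S.
Proof. by move=> xM; exact: le_bigmax_seq xM _. Qed.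

Lemma RS_le M S c : 0 <= c -> (forall x, x \in M -> delta x S <= c) -> RS M S <= c.
Proof. by move=> c_ge0 le_c; rewrite /RS big_seq bigmax_le. Qed.

Lemma RS_ge0 M S : 0 <= RS M S.
Proof. exact: bigmax_ge_id. Qed.

Lemma rS_le_edist S p q : p \in S -> q \in S -> p != q -> 2 * rS S <= edist p q.
Proof.
move=> pS qS pq; rewrite /rS mulrC divfK ?pnatr_eq0 //.
apply: le_trans (ge_bigmin_seq _ _ xpredT _ pS erefl) _.
exact: ge_bigmin_seq _ _ (fun q => p != q) (edist p) qS pq.
Qed.

Lemma le_rS_nth S c : (1 < size S)%N ->
  (forall i j, (i < size S)%N -> (j < size S)%N -> i != j ->
     c <= edist (nth 0 S i) (nth 0 S j)) ->
  c <= 2 * rS S.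
Proof.
move=> S_gt1 le_c; rewrite /rS mulrC divfK ?pnatr_eq0 //.
have le_c_mem p q : p \in S -> q \in S -> p != q -> c <= edist p q.
  move=> pS qS pq; rewrite -(nth_index 0 pS) -(nth_index 0 qS).
  apply: le_c; rewrite ?index_mem //.
  by apply: contra pq => /eqP eq_idx; rewrite -(nth_index 0 pS) eq_idx nth_index.
have le_c01 : c <= edist (nth 0 S 0) (nth 0 S 1) by apply: le_c; lia.
rewrite big_seq_cond; apply: le_bigmin => // p /andP[pS _].
by rewrite big_seq_cond; apply: le_bigmin => // q /andP[qS pq]; apply: le_c_mem.
Qed.

Lemma rS_gt0 S : uniq S -> (1 < size S)%N -> 0 < rS S.
Proof.
move=> uS S_gt1; rewrite /rS divr_gt0 //.
have nth01 : nth 0 S 0 != nth 0 S 1 by rewrite nth_uniq // (ltn_trans _ S_gt1).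
elim/big_ind: _ => [|u v|p _]; rewrite ?edist_gt0 //; first by move=> *; rewrite lt_min; apply/andP.
elim/big_ind: _ => [|u v|q]; rewrite ?edist_gt0 //.
by move=> *; rewrite lt_min; apply/andP.
Qed.

Lemma GR_le2 M S : 0 < rS S -> (GR M S <= 2) = (RS M S <= 2 * rS S).
Proof. by move=> rS_gt0; rewrite /GR ler_pdivrMr // mulrC. Qed.

Section Perturbation.
Variables (M Q Q' : seq pt) (t : R).
Hypotheses (size_Q' : size Q' = size Q) (uniq_Q : uniq Q) (size_Q_gt1 : (1 < size Q)%N).
Hypothesis close : forall i, (i < size Q)%N -> edist (nth 0 Q i) (nth 0 Q' i) <= t.

Lemma perturb_ge0 : 0 <= t.
Proof.
have size_Q_gt0 : (0 < size Q)%N by lia.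
exact: le_trans (edist_ge0 _ _) (close size_Q_gt0).
Qed.

Lemma edist_nth_perturb i j : (i < size Q)%N -> (j < size Q)%N -> i != j ->
  2 * rS Q - 2 * t <= edist (nth 0 Q' i) (nth 0 Q' j).
Proof.
move=> i_lt j_lt ij.
have sepQ : 2 * rS Q <= edist (nth 0 Q i) (nth 0 Q j) by rewrite rS_le_edist ?mem_nth ?nth_uniq.
have := edist_triangle (nth 0 Q i) (nth 0 Q' i) (nth 0 Q j).
have := edist_triangle (nth 0 Q' i) (nth 0 Q' j) (nth 0 Q j).
have := close i_lt; have := close j_lt; rewrite (edistC (nth 0 Q' j)); lra.
Qed.

Lemma rS_perturb : rS Q - t <= rS Q'.
Proof.
suff : 2 * rS Q - 2 * t <= 2 * rS Q' by lra.
by apply: le_rS_nth => [|i j]; rewrite size_Q' //; apply: edist_nth_perturb.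
Qed.

Lemma uniq_perturb : t < rS Q -> uniq Q'.
Proof.
move=> t_lt; apply/(uniqP 0) => i j; rewrite !inE size_Q' => i_lt j_lt eq_ij.
apply/eqP/negPn/negP => ij; have := edist_nth_perturb i_lt j_lt ij.
by rewrite eq_ij edistxx; lra.
Qed.

Lemma RS_perturb : RS M Q' <= RS M Q + t.
Proof.
apply: RS_le => [|x xM]; first by rewrite addr_ge0 ?RS_ge0 ?perturb_ge0.
have Q_neq0 : Q != [::] by rewrite -size_eq0 -lt0n (ltn_trans _ size_Q_gt1).
have [s sQ delta_eq] := delta_attained x Q_neq0.
have i_lt : (index s Q < size Q)%N by rewrite index_mem.
have := delta_le_RS Q xM; rewrite delta_eq -(nth_index 0 sQ).
have := edist_triangle x (nth 0 Q (index s Q)) (nth 0 Q' (index s Q)).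
have := close i_lt.
have : delta x Q' <= edist x (nth 0 Q' (index s Q)) by rewrite delta_le_edist ?mem_nth ?size_Q'.
lra.
Qed.

Lemma GR_perturb (e c : R) : 0 <= e -> 2 * e < 1 -> 1 + e <= c * (1 - 2 * e) ->
  RS M Q <= 2 * rS Q -> t <= e * RS M Q -> uniq Q' /\ GR M Q' <= c * GR M Q.
Proof.
move=> e_ge0 e_lt c_ge RS_le2 t_le.
have rS_Q_gt0 := rS_gt0 uniq_Q size_Q_gt1.
have e_RS_le : e * RS M Q <= e * (2 * rS Q) by apply: ler_wpM2l.
split; first by apply: uniq_perturb; nra.
apply: ratio_perturb_le e_ge0 e_lt c_ge rS_Q_gt0 _ _ RS_perturb rS_perturb.
  by rewrite RS_ge0.
by rewrite perturb_ge0.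
Qed.
End Perturbation.

Lemma cell_edist_le (e : R) o x y : 0 < e -> cell e o x =1 cell e o y ->
  edist x y <= Num.sqrt d%:R * e.
Proof.
move=> e_gt0 same_cell.
have coord_le i : (x 0 i - y 0 i) ^+ 2 <= e ^+ 2.
  have := floor_eq_dist (same_cell i).
  have -> : x 0 i - y 0 i = ((x 0 i - o 0 i) / e - (y 0 i - o 0 i) / e) * e.
    by field; exact: lt0r_neq0.
  set u := _ - _; rewrite ltr_norml => /andP[u_gt u_lt].
  by rewrite exprMn -[leRHS]mul1r ler_wpM2r ?sqr_ge0 //; nra.
apply: le_trans (ler_wsqrtr (ler_sum _ (fun i _ => coord_le i))) _.
by rewrite sumr_const card_ord -[_ *+ d]mulr_natl sqrtrM ?ler0n // sqrtr_sqr gtr0_norm.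
Qed.

Lemma grid_reps_approx (e : R) o M C Q : grid_reps e o M C -> 0 < e -> {subset Q <= M} ->
  exists Q', [/\ size Q' = size Q, {subset Q' <= C} &
    forall i, (i < size Q)%N -> edist (nth 0 Q i) (nth 0 Q' i) <= Num.sqrt d%:R * e].
Proof.
move=> [_ reps _] e_gt0; elim: Q => [|q Q IH] sub; first by exists [::].
have sub_Q : {subset Q <= M} by move=> y yQ; rewrite sub // inE yQ orbT.
have [Q' [size_Q' Q'C close]] := IH sub_Q.
have [c cC same_cell] := reps q (sub q (mem_head _ _)).
exists (c :: Q'); split => /=; first by rewrite size_Q'.
  by move=> y; rewrite inE => /predU1P[->|/Q'C].
by case=> [|i] /=; [rewrite edistC (cell_edist_le e_gt0 same_cell) | exact: close].
Qed.

Lemma grid_snap (e e1 c : R) o M C Q : grid_reps e o M C -> 0 < e ->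
  0 <= e1 -> 2 * e1 < 1 -> 1 + e1 <= c * (1 - 2 * e1) ->
  uniq Q -> (1 < size Q)%N -> {subset Q <= M} -> RS M Q <= 2 * rS Q ->
  Num.sqrt d%:R * e <= e1 * RS M Q ->
  exists2 Q', [/\ uniq Q', size Q' = size Q & {subset Q' <= C}] & GR M Q' <= c * GR M Q.
Proof.
move=> gridC e_gt0 e1_ge0 e1_lt c_ge uniq_Q size_Q_gt1 QM RS_le2 t_le.
have [Q' [size_Q' Q'C close]] := grid_reps_approx gridC e_gt0 QM.
have [uniq_Q' GR_Q'] := GR_perturb size_Q' uniq_Q size_Q_gt1 close e1_ge0 e1_lt c_ge RS_le2 t_le.
by exists Q'.
Qed.

Lemma edist_le_diam M p q : p \in M -> q \in M -> edist p q <= diam M.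
Proof.
move=> pM qM; apply: le_trans (le_bigmax_seq _ _ xpredT _ pM erefl).
exact: le_bigmax_seq _ _ xpredT (edist p) qM erefl.
Qed.

Lemma pigeonhole_RS M Q Y : {subset Y <= M} -> (0 < size Q < size Y)%N ->
  exists i j, [/\ (i < size Y)%N, (j < size Y)%N, i != j &
    edist (nth 0 Y i) (nth 0 Y j) <= 2 * RS M Q].
Proof.
move=> YM /andP[Q_gt0 Q_lt_Y].
have Q_neq0 : Q != [::] by rewrite -size_eq0 -lt0n.
have nearest (a : 'I_(size Y)) : exists j : 'I_(size Q),
    delta (nth 0 Y a) Q = edist (nth 0 Y a) (nth 0 Q j).
  have [s sQ ->] := delta_attained (nth 0 Y a) Q_neq0.
  have idx_lt : (index s Q < size Q)%N by rewrite index_mem.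
  by exists (Ordinal idx_lt); rewrite /= nth_index.
have [f f_nearest] := fin_all_exists nearest.
have /injectivePn[a [b ab fab]] : ~~ injectiveb f.
  by apply/negP => /injectiveP f_inj; have := leq_card f f_inj; rewrite !card_ord; lia.
exists a, b; split => //.
have RS_a := delta_le_RS Q (YM _ (mem_nth 0 (ltn_ord a))).
have RS_b := delta_le_RS Q (YM _ (mem_nth 0 (ltn_ord b))).
rewrite f_nearest in RS_a; rewrite f_nearest -fab edistC in RS_b.
have := edist_triangle (nth 0 Y a) (nth 0 Q (f a)) (nth 0 Y b); lra.
Qed.

Section FarthestPointInsertion.
Variables (M : seq pt) (k : nat) (P1 : seq pt).
Hypothesis fpi : fpi_output M k P1.

Lemma fpi_delta_le_edist x i j : x \in M -> (i < k)%N -> (j < k)%N -> i != j ->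
  delta x P1 <= edist (nth 0 P1 i) (nth 0 P1 j).
Proof.
have [size_P1 P1M diam_P1 fpi_max] := fpi.
move=> xM; wlog ij : i j / (i < j)%N => [W i_lt j_lt ij_neq|i_lt j_lt _].
  case: (ltngtP i j) => [lt_ij|gt_ij|eq_ij]; first exact: W.
    by rewrite edistC W // eq_sym.
  by rewrite eq_ij eqxx in ij_neq.
have [j_ge2|j_lt2] := leqP 2 j.
  have size_take : size (take j P1) = j by rewrite size_takel // size_P1 ltnW.
  have take_neq0 : take j P1 != [::] by rewrite -size_eq0 size_take; lia.
  apply: le_trans (delta_le_sub x take_neq0 (fun _ => @mem_take _ _ _ _)) _.
  apply: le_trans (fpi_max j _ x xM) _; first by rewrite j_ge2.
  by rewrite edistC delta_le_edist // -(nth_take 0 ij) mem_nth // size_take.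
have [-> ->] : j = 1%N /\ i = 0%N by lia.
have P1_0 : nth 0 P1 0 \in P1 by rewrite mem_nth // size_P1; lia.
rewrite diam_P1; apply: le_trans (delta_le_edist x P1_0) _.
by rewrite edist_le_diam // P1M.
Qed.

Lemma fpi_RS_le_edist i j : (i < k)%N -> (j < k)%N -> i != j ->
  RS M P1 <= edist (nth 0 P1 i) (nth 0 P1 j).
Proof. by move=> *; apply: RS_le => [|x xM]; rewrite ?edist_ge0 ?fpi_delta_le_edist. Qed.

Lemma fpi_RS_le_RS2 Q : (0 < k)%N -> size Q = k -> RS M P1 <= 2 * RS M Q.
Proof.
have [size_P1 P1M _ _] := fpi.
move=> k_gt0 size_Q; apply: RS_le => [|x xM]; first by rewrite mulr_ge0 ?RS_ge0.
have xP1M : {subset x :: P1 <= M} by move=> y; rewrite inE => /predU1P[->|/P1M].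
have [|i [j [i_lt j_lt ij close_ij]]] := pigeonhole_RS (Q := Q) xP1M.
  by rewrite size_Q /= size_P1 k_gt0 ltnSn.
apply: le_trans close_ij; rewrite /= size_P1 in i_lt j_lt.
case: i j i_lt j_lt ij => [|i] [|j] //= i_lt j_lt ij.
- by rewrite delta_le_edist // mem_nth ?size_P1.
- by rewrite edistC delta_le_edist // mem_nth ?size_P1.
- exact: fpi_delta_le_edist.
Qed.

Hypothesis k_ge2 : (2 <= k)%N.

Lemma fpi_RS_le_rS2 : RS M P1 <= 2 * rS P1.
Proof.
have [size_P1 _ _ _] := fpi.
by apply: le_rS_nth => [|i j]; rewrite size_P1 //; apply: fpi_RS_le_edist.
Qed.

Hypotheses (uniq_M : uniq M) (k_lt_M : (k < size M)%N).

Lemma fpi_RS_gt0 : 0 < RS M P1.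
Proof.
have [size_P1 _ _ _] := fpi.
have /allPn[x xM xP1] : ~~ all (mem P1) M.
  by apply/negP => /allP MP1; have := uniq_leq_size uniq_M MP1; rewrite size_P1 leqNgt k_lt_M.
have P1_neq0 : P1 != [::] by rewrite -size_eq0 size_P1; lia.
apply: lt_le_trans (delta_le_RS P1 xM); have [s sP1 ->] := delta_attained x P1_neq0.
by rewrite edist_gt0; apply: contraNneq xP1 => ->.
Qed.

Lemma fpi_uniq : uniq P1.
Proof.
have [size_P1 _ _ _] := fpi.
apply/(uniqP 0) => i j; rewrite !inE size_P1 => i_lt j_lt eq_ij.
apply/eqP/negPn/negP => ij; have := fpi_RS_le_edist i_lt j_lt ij.
by rewrite eq_ij edistxx; have := fpi_RS_gt0; lra.
Qed.

End FarthestPointInsertion.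

End EuclideanDistance.

Theorem theorem9 (R : realType) (d n k : nat) (M : seq 'rV[R]_d) (eps : R)
    (P1 : seq 'rV[R]_d) (o : 'rV[R]_d) (C P : seq 'rV[R]_d) :
  uniq M -> size M = n ->
  (2 <= k)%N -> (k < n)%N ->
  0 < eps -> eps < 1 / 2 ->
  fpi_output M k P1 ->
  let eps1 := eps / (3 + 2 * eps) in
  let eps2 := eps1 * RS M P1 / (2 * Num.sqrt (d%:R)) in
  grid_reps eps2 o M C ->
  uniq P -> size P = k -> {subset P <= C} ->
  (forall P' : seq 'rV[R]_d, uniq P' -> size P' = k -> {subset P' <= C} ->
     GR M P <= GR M P') ->
  forall Q : seq 'rV[R]_d, uniq Q -> size Q = k -> {subset Q <= M} ->
    GR M P <= (1 + eps) * GR M Q.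
Proof.
move=> uniq_M size_M k_ge2 k_lt_n eps_gt0 _ fpi eps1 eps2 gridC uniq_P size_P PC P_opt.
have k_lt_M : (k < size M)%N by rewrite size_M.
have RS_P1_gt0 := fpi_RS_gt0 fpi k_ge2 uniq_M k_lt_M.
have size_M_gt1 : (1 < size M)%N by lia.
have d_gt0 : (0 < d)%N.
  by apply: (@dim_gt0 _ _ (nth 0 M 0) (nth 0 M 1)); rewrite nth_uniq // ltnW.
have sqrt_d_gt0 : 0 < Num.sqrt (d%:R : R) by rewrite sqrtr_gt0 ltr0n.
have [eps1_gt0 eps1_lt eps_eq] :
  [/\ 0 < eps1, 2 * eps1 < 1 & 1 + eps1 <= (1 + eps) * (1 - 2 * eps1)] := eps1_bounds eps_gt0.
have eps2_gt0 : 0 < eps2 by apply: divr_gt0; [exact: mulr_gt0 | rewrite mulr_gt0].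
have t_eq : Num.sqrt d%:R * eps2 = eps1 * RS M P1 / 2 by rewrite /eps2; field; rewrite gt_eqF.
have snap S : uniq S -> size S = k -> {subset S <= M} -> GR M S <= 2 ->
    GR M P <= (1 + eps) * GR M S.
  move=> uniq_S size_S SM; have size_S_gt1 : (1 < size S)%N by rewrite size_S.
  rewrite GR_le2 ?rS_gt0 // => RS_S_le2.
  have t_le : Num.sqrt d%:R * eps2 <= eps1 * RS M S.
    by rewrite t_eq; have := fpi_RS_le_RS2 fpi (ltnW k_ge2) size_S; nra.
  have [S' [uniq_S' size_S' S'C] GR_S'] :=
    grid_snap gridC eps2_gt0 (ltW eps1_gt0) eps1_lt eps_eq uniq_S size_S_gt1 SM RS_S_le2 t_le.
  exact: le_trans (P_opt S' uniq_S' (etrans size_S' size_S) S'C) GR_S'.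
move=> Q uniq_Q size_Q QM.
have [GR_Q_le2|GR_Q_gt2] := leP (GR M Q) 2; first exact: snap.
have [size_P1 P1M _ _] := fpi.
have uniq_P1 := fpi_uniq fpi k_ge2 uniq_M k_lt_M.
have GR_P1_le2 : GR M P1 <= 2.
  by rewrite GR_le2 ?(rS_gt0 uniq_P1) ?size_P1 // (fpi_RS_le_rS2 fpi k_ge2).
apply: le_trans (snap P1 uniq_P1 size_P1 P1M GR_P1_le2) _.
by rewrite ler_wpM2l ?ltW //; lra.
Qed.
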